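(* Let $\mathcal X=\mathcal H$ or $\mathcal E$, $T,L>0$, and suppose that $\{X^\epsilon\}$ satisfies a moderate deviation principle with action functional $\mathcal S_{x,T}$ and that $E=\{\phi\in C([0,T];\mathcal H):\tau_\phi\le T\}$ is an $\mathcal S_{x^*,T}$-continuity set. Then any unbiased estimator $\hat P(\epsilon)$ of $P(\epsilon)=\mathbb P[\tau^\epsilon\le T]$, defined on a probability space $(\Omega,\mathscr F,\bar{\mathbb P})$, satisfies $$\limsup_{\epsilon\to0}-\frac1{h^2(\epsilon)}\log\bar{\mathbb E}[\hat P(\epsilon)^2]\le2G_T(0,0),\qquad G_T(0,0):=\inf\{\mathcal S_{x^*,T}(\phi):\phi\in C([0,T];\mathcal X),\ \phi(0)=0,\ \tau_\phi=T\}.$$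
   Context: Setting: $\ell>0$, $\mathcal H=L^2(0,\ell)$, $\mathcal E$ a space of continuous functions on $[0,\ell]$ satisfying given boundary conditions, with sup norm. $A$ is a uniformly elliptic second-order differential operator on $(0,\ell)$ with these boundary conditions, $F$ a superposition operator $F(x)(\xi)=f(x(\xi))$, $W$ a cylindrical Wiener process on $\mathcal H$, and for $\epsilon>0$, $x\in\mathcal X$, $X^\epsilon_x$ is the mild solution of $dX=[AX+F(X)]dt+\sqrt\epsilon dW$, $X(0)=x$; $X^0_x$ is the solution with $\epsilon=0$. $x^*$ is an equilibrium ($Ax^*+F(x^* )=0$), $X^\epsilon=X^\epsilon_{x^*}$ in $P(\epsilon)$. $h(\epsilon)\to\infty$, $\sqrt\epsilon h(\epsilon)\to0$. $\eta^\epsilon_x=(X^\epsilon_x-X^0_x)/(\sqrt\epsilon h(\epsilon))$; $\tau^\epsilon=\inf\{t>0:\|\eta^\epsilon_{x^*}(t)\|_{\mathcal H}\ge L\}$. For a path $\phi$, $\tau_\phi=\inf\{t>0:\phi(t)\notin\mathring B_{\mathcal H}(0,L)\}$ (exit time from the open ball of radius $L$). Moderate deviation principle: given functionals $\mathcal S_{x,T}:C([0,T];\mathcal X)\to[0,\infty]$ with compact sub-level sets, $\{X^\epsilon\}$ satisfies an MDP with action functional $\mathcal S_{x,T}$ if for every bounded continuous $g:C([0,T];\mathcal X)\to\mathbb R$, $\lim_{\epsilon\to0}\frac1{h^2(\epsilon)}\log\mathbb Ee^{-h^2(\epsilon)g(\eta^\epsilon_x)}=-\inf_{\phi(0)=0}[\mathcal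 S_{x,T}(\phi)+g(\phi)]$. A Borel set $E$ is an $\mathcal S_{x,T}$-continuity set if $\inf_{\bar E}\mathcal S_{x,T}=\inf_{\mathring E}\mathcal S_{x,T}$. An unbiased estimator of $P(\epsilon)$ is a random variable $\hat P(\epsilon)$ with $\bar{\mathbb E}[\hat P(\epsilon)]=P(\epsilon)$. *)

From HB Require Import structures.
From mathcomp Require Import all_boot all_order all_algebra.
From mathcomp Require Import all_classical all_reals all_analysis.
Set Implicit Arguments. Unset Strict Implicit. Unset Printing Implicit Defensive.
Import Order.TTheory GRing.Theory Num.Def Num.Theory.
Import numFieldNormedType.Exports.
Local Open Scope classical_set_scope.
Local Open Scope ring_scope.

Section Defs.
Variables (R : realType) (X : normedModType R).

Definition Cpath (T : R) : set (R -> X) :=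
  [set phi | {within `[0, T], continuous phi}].

Definition supclose (T d : R) (phi psi : R -> X) : Prop :=
  forall t, t \in `[0, T] -> `|phi t - psi t| <= d.

Definition Copen (T : R) (A : set (R -> X)) : Prop :=
  A `<=` Cpath T /\
  forall phi, A phi -> exists2 d : R, 0 < d &
    forall psi, Cpath T psi -> supclose T d phi psi -> A psi.

Definition Cclosure (T : R) (A : set (R -> X)) : set (R -> X) :=
  [set phi | Cpath T phi /\
     forall d : R, 0 < d -> exists2 psi, A psi & supclose T d phi psi].

Definition Cinterior (T : R) (A : set (R -> X)) : set (R -> X) :=
  [set phi | A phi /\ Cpath T phi /\ exists2 d : R, 0 < d &
     forall psi, Cpath T psi -> supclose T d phi psi -> A psi].

Definition bdd_cont_functional (T : R) (g : (R -> X) -> R) : Prop :=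
  (exists M : R, forall phi, Cpath T phi -> `|g phi| <= M) /\
  forall phi, Cpath T phi -> forall e : R, 0 < e -> exists2 d : R, 0 < d &
    forall psi, Cpath T psi -> supclose T d phi psi -> `|g phi - g psi| <= e.

(* a functional with values in [0,+oo] and compact sub-level sets in C([0,T];X)
   (compactness = sequential compactness in the sup-norm metric) *)
Definition good_rate (T : R) (S : (R -> X) -> \bar R) : Prop :=
  (forall phi, (0 <= S phi)%E) /\
  forall a : R, forall u : nat -> (R -> X),
    (forall n, Cpath T (u n) /\ (S (u n) <= a%:E)%E) ->
    exists sigma : nat -> nat, (forall n, (sigma n < sigma n.+1)%N) /\
    exists phi, Cpath T phi /\ (S phi <= a%:E)%E /\
      forall e : R, 0 < e -> \forall n \near \oo, supclose T e (u (sigma n)) phi.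

(* exit time from the open H-ball of radius L, restricted to the time interval
   (0,T]: inf { t in (0,T] : |phi t|_H >= L }, with inf of the empty set = +oo *)
Definition exit_time (nH : X -> R) (T L : R) (phi : R -> X) : \bar R :=
  ereal_inf [set t%:E | t in [set t | t \in `]0, T] /\ L <= nH (phi t)]].

Definition continuity_set (T : R) (S : (R -> X) -> \bar R) (E : set (R -> X)) :=
  ereal_inf (S @` (Cclosure T E `&` [set phi | phi 0 = 0])) =
  ereal_inf (S @` (Cinterior T E `&` [set phi | phi 0 = 0])).

End Defs.

Definition elog (R : realType) (x : \bar R) : \bar R :=
  match x with
  | r%:E => if (0 < r)%R then (ln r)%:E else -oo
  | +oo => +oo
  | -oo => -oo
  end%E.

(* the rescaled fluctuation eta^eps = (X^eps - X^0)/(sqrt eps h(eps)), with X^0 = x* *)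
Definition eta_of (R : realType) (X : normedModType R) (Omega : Type)
  (h : R -> R) (Xe : R -> Omega -> R -> X) (xstar : X) (eps : R) (w : Omega)
  : R -> X :=
  fun t => (Num.sqrt eps * h eps)^-1 *: (Xe eps w t - xstar).

(* moderate deviation principle (Laplace form) for {X^eps} started at x*,
   with action functional S on C([0,T];X) *)
Definition MDP (R : realType) (X : normedModType R) (d : measure_display)
  (Omega : measurableType d) (P : probability Omega R) (h : R -> R)
  (Xe : R -> Omega -> R -> X) (xstar : X) (T : R) (S : (R -> X) -> \bar R) : Prop :=
  good_rate T S /\
  forall g : (R -> X) -> R, bdd_cont_functional T g ->
    (fun eps => ((h eps ^- 2)%:E *
       elog (\int[P]_w (expR (- (h eps ^+ 2 * g (eta_of h Xe xstar eps w))))%:E))%E)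
    @ 0^'+ -->
    (- ereal_inf [set (S phi + (g phi)%:E)%E | phi in
                   [set phi | Cpath T phi /\ phi 0%R = 0%R]])%E.

(* By Jensen, E[Phat^2] >= E[Phat]^2 = P(tau <= T)^2, so it suffices to bound
   P(tau <= T) below by exp (- (G + e) h^2).  Paths exiting exactly at time T lie
   in the closure of the exit set E, so the continuity of E yields a path phi0 in
   the interior of E, starting at 0, with action below G + e.  Since the MDP is in
   Laplace form, test it against a bounded continuous functional g vanishing at
   phi0 and equal to M outside a sup-norm ball around phi0 contained in E: then
   E exp (- h^2 g(eta)) <= P(eta in E) + exp (- h^2 M), and the Laplace limit
   makes the first term dominate.  The event {tau <= T} is measurable, being a
   countable union of countable intersections of open sets of paths. *)

From HB Require Import structures.
From mathcomp Require Import all_boot all_order all_algebra.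
From mathcomp Require Import all_classical all_reals all_analysis.
From mathcomp Require Import measurable_realfun.
From mathcomp Require Import lra ring.
Import Order.TTheory GRing.Theory Num.Def Num.Theory.
Import numFieldNormedType.Exports.
Local Open Scope classical_set_scope.
Local Open Scope ring_scope.

Section exit_event.
Context {R : realType} {X : normedModType R} {nH : X -> R} {T L : R}.
Hypothesis nH_cont : continuous nH.

Lemma exit_time_leP (phi : R -> X) :
  (exit_time nH T L phi <= T%:E)%E <-> exists2 t, t \in `]0, T] & L <= nH (phi t).
Proof.
split=> [|[t t0T Lt]]; last first.
  apply: ge_ereal_inf; exists t%:E; first by exists t.
  by move: t0T; rewrite lee_fin in_itv /= => /andP[].
apply: contraPP => noexit; rewrite /exit_time.
suff -> : [set t%:E | t in [set t | t \in `]0, T] /\ L <= nH (phi t)]] = set0.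
  by rewrite ereal_inf0 leNgt ltey.
by apply/seteqP; split => // x [t [t0T Lt] _]; apply: noexit; exists t.
Qed.

Definition exit_approx (n m : nat) : set (R -> X) :=
  [set phi | Cpath T phi /\
    exists2 t, t \in `[n.+1%:R^-1, T] & L - m.+1%:R^-1 < nH (phi t)].

Lemma Copen_exit_approx n m : Copen T (exit_approx n m).
Proof.
split; first by move=> phi [].
move=> phi [_ [t tnT Lt]].
have /cvgrPdist_lt /(_ (nH (phi t) - (L - m.+1%:R^-1))) := nH_cont (phi t).
rewrite subr_gt0 => /(_ Lt) /nbhs_ballP [e e0 nH_near].
exists (e / 2) => [|psi Cpsi close]; first by rewrite divr_gt0.
split=> //; exists t => //.
have t0T : t \in `[0, T].
  move: tnT; rewrite !in_itv /= => /andP[nt ->]; rewrite andbT.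
  by apply: le_trans nt; rewrite invr_ge0.
have /nH_near /= : ball (phi t) e (psi t).
  rewrite -ball_normE /=; apply: le_lt_trans (close t t0T) _.
  by rewrite ltr_pdivrMr // ltr_pMr // ltr1n.
by set k := m.+1%:R^-1 in Lt *; move=> /(le_lt_trans (ler_norm _)); lra.
Qed.

Lemma exit_time_le_exit_approxP (phi : R -> X) : Cpath T phi ->
  (exit_time nH T L phi <= T%:E)%E <-> exists n, forall m, exit_approx n m phi.
Proof.
move=> Cphi; rewrite exit_time_leP; split=> [[t t0T Lt]|[n approx]].
  have [|n tn] := @ltr_add_invr R 0 t; first by move: t0T; rewrite in_itv /= => /andP[].
  rewrite add0r in tn; exists n => m; split=> //; exists t.
    by move: t0T; rewrite !in_itv /= => /andP[_ ->]; rewrite (ltW tn).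
  by apply: lt_le_trans Lt; rewrite gtrBl invr_gt0.
have [_ [t0 /[!in_itv] /= /andP[n_t0 t0T] _]] := approx 0%N.
have nT : n.+1%:R^-1 <= T :> R := le_trans n_t0 t0T.
have cnHphi : {within `[n.+1%:R^-1, T], continuous (nH \o phi)}.
  apply: within_continuous_comp => [y _|]; first exact: nH_cont.
  by apply: continuous_subspaceW Cphi; apply: subset_itvScc; rewrite bnd_simp // invr_ge0.
(* by compactness [nH \o phi] attains on [1/(n+1), T] a maximum above every [L - 1/(m+1)] *)
have [c cnT cmax] := EVT_max nT cnHphi.
exists c.
  move: cnT; rewrite !in_itv /= => /andP[nc ->]; rewrite andbT.
  by rewrite (lt_le_trans _ nc) // invr_gt0.
rewrite leNgt; apply/negP => /ltr_add_invr [m Lm].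
have [_ [t tnT Lt]] := approx m.
by have /= := cmax t tnT; set k := m.+1%:R^-1 in Lm Lt *; lra.
Qed.

Lemma measurable_exit_event {d} {Omega : measurableType d} {eta : Omega -> R -> X} :
  (forall w, Cpath T (eta w)) ->
  (forall A, Copen T A -> measurable [set w | A (eta w)]) ->
  measurable [set w | (exit_time nH T L (eta w) <= T%:E)%E].
Proof.
move=> Ceta meta.
have -> : [set w | (exit_time nH T L (eta w) <= T%:E)%E] =
    \bigcup_n \bigcap_m [set w | exit_approx n m (eta w)].
  apply/seteqP; split=> w /=; rewrite (exit_time_le_exit_approxP _ (Ceta w)).
    by move=> [n approx]; exists n => // m _; exact: approx.
  by move=> [n _ approx]; exists n => m; exact: approx.
apply: bigcupT_measurable => n; apply: bigcapT_measurable => m.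
exact/meta/Copen_exit_approx.
Qed.

End exit_event.

Arguments exit_approx {R X} nH T L n m.

Section elog.
Variable R : realType.
Local Open Scope ereal_scope.

Lemma lte_elog_expR (q r : R) (x : \bar R) : (0 < q)%R ->
  (r%:E < q^-1%:E * elog x) = ((expR (r * q))%:E < x).
Proof.
move=> q0; case: x => [y| |] /=.
- case: ifPn => [y0|]; last first.
    rewrite -leNgt => y_le0; rewrite gt0_muleNy ?lte_fin ?invr_gt0 // ltNge leNye /=.
    by rewrite ltNge (le_trans y_le0) ?expR_ge0.
  by rewrite lte_pdivlMl // -EFinM !lte_fin -{2}(lnK y0) ltr_expR mulrC.
- by rewrite gt0_muley ?lte_fin ?invr_gt0 // !ltry.
- by rewrite gt0_muleNy ?lte_fin ?invr_gt0 // ltNge leNye /= ltNge leNye.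
Qed.

Lemma lee_elog_expR (q r : R) (x : \bar R) : (0 < q)%R ->
  (r%:E <= q^-1%:E * elog x) = ((expR (r * q))%:E <= x).
Proof.
move=> q0; case: x => [y| |] /=.
- case: ifPn => [y0|]; last first.
    rewrite -leNgt => y_le0; rewrite gt0_muleNy ?lte_fin ?invr_gt0 // leeNy_eq.
    by rewrite lee_fin leNgt (le_lt_trans y_le0 (expR_gt0 _)).
  by rewrite lee_pdivlMl // -EFinM !lee_fin -{2}(lnK y0) ler_expR mulrC.
- by rewrite gt0_muley ?lte_fin ?invr_gt0 // !leey.
- by rewrite gt0_muleNy ?lte_fin ?invr_gt0 // leeNy_eq /= leeNy_eq.
Qed.

End elog.

Section ereal_bounds.
Variable R : realType.
Local Open Scope ereal_scope.

Lemma lee_pmul_of_forall_gt (c : R) (x y : \bar R) : (0 < c)%R -> 0 <= y ->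
  (forall r : R, y < r%:E -> x <= (c * r)%:E) -> x <= c%:E * y.
Proof.
move=> c0; case: y => [y| |] // y0 xle; last by rewrite gt0_muley ?lte_fin // leey.
apply/lee_addgt0Pr => e e0; have := xle (y + e / c)%R; rewrite lte_fin ltrDl divr_gt0 //.
by move=> /(_ isT); rewrite mulrDr mulrCA divff ?gt_eqF // mulr1 EFinD EFinM.
Qed.

Lemma limf_esup_le_near (T : choiceType) (Y : filteredType T) (F : set_system Y)
  (f : Y -> \bar R) (c : \bar R) :
  F [set t | f t <= c] -> limf_esup f F <= c.
Proof.
move=> Ffc; rewrite limf_esupE; apply: ge_ereal_inf.
exists (ereal_sup (f @` [set t | f t <= c])); first by exists [set t | f t <= c].
by apply: ge_ereal_sup => _ [t ftc <-].
Qed.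

End ereal_bounds.

Section integral_bounds.
Context {d : measure_display} {Omega : measurableType d} {R : realType}.
Local Open Scope ereal_scope.

(* Stated without measurability: the integrands [expR (- q * g (eta w))] of the Laplace
   functional are not known to be measurable. *)
Lemma ge0_le_integral_nonmeas {mu : {measure set Omega -> \bar R}} {f g : Omega -> \bar R} :
  (forall w, 0 <= f w) -> (forall w, f w <= g w) ->
  \int[mu]_w f w <= \int[mu]_w g w.
Proof.
move=> f0 fg; have g0 w : 0 <= g w := le_trans (f0 w) (fg w).
rewrite (ge0_integralE _ (fun w _ => f0 w)) (ge0_integralE _ (fun w _ => g0 w)).
rewrite !patch_setT; apply: ereal_sup_le => _ [k kf <-]; exists k => //.
by move=> w; apply: le_trans (kf w) (fg w).
Qed.

Context {P : probability Omega R}.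

Lemma integral_le_measure_addr {A : set Omega} {f : Omega -> R} {b : R} :
  measurable A -> (0 <= b)%R -> (forall w, 0 <= f w)%R ->
  (forall w, f w <= \1_A w + b)%R ->
  \int[P]_w (f w)%:E <= P A + b%:E.
Proof.
move=> mA b0 f0 fAb.
have -> : P A + b%:E = \int[P]_w ((\1_A w)%:E + b%:E).
  rewrite ge0_integralD //; last exact/measurable_EFinP/measurable_indic.
  rewrite integral_indic // setIT integral_cst //; congr (_ + _).
  by rewrite -[LHS]mule1; congr (_ * _); exact/esym/probability_setT.
by apply: ge0_le_integral_nonmeas => w; rewrite ?lee_fin // -EFinD lee_fin.
Qed.

Lemma sqr_integral_le_integral_sqr {Y : Omega -> R} :
  P.-integrable setT (EFin \o Y) ->
  (\int[P]_w (Y w)%:E) ^+ 2 <= \int[P]_w ((Y w) ^+ 2)%:E.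
Proof.
move=> iY; have /integrableP[/measurable_EFinP mY _] := iY.
have [m Em] : exists m, \int[P]_w (Y w)%:E = m%:E.
  by exists (fine (\int[P]_w (Y w)%:E)); rewrite fineK // integrable_fin_num.
have [->|Y2_fin] := eqVneq (\int[P]_w ((Y w) ^+ 2)%:E) +oo; first by rewrite leey.
have iY2 : P.-integrable setT (EFin \o (fun w => Y w ^+ 2)%R).
  apply/integrableP; split; first exact/measurable_EFinP/measurable_funX.
  under eq_integral => w _ do rewrite /= ger0_norm ?sqr_ge0 //.
  by rewrite ltey.
(* integrate [2 m y - m^2 <= y^2], where [m] is the mean *)
have i2mY : P.-integrable setT (EFin \o (fun w => 2 * m * Y w)%R).
  exact: eq_integrable (integrableZl measurableT (2 * m) iY).
have iaff : P.-integrable setT (EFin \o (fun w => 2 * m * Y w - m ^+ 2)%R).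
  exact: eq_integrable (integrableB measurableT i2mY
    (finite_measure_integrable_cst P (m ^+ 2) measurableT)).
have affine_le : {in setT, forall w, (2 * m * Y w - m ^+ 2)%:E <= (Y w ^+ 2)%:E}.
  by move=> w _; rewrite lee_fin; have := sqr_ge0 (Y w - m); nra.
apply: le_trans (le_integral measurableT iaff iY2 affine_le).
under eq_integral => w _ do rewrite /= EFinB.
rewrite integralB_EFin //; last exact: finite_measure_integrable_cst.
under eq_integral => w _ do rewrite EFinM.
rewrite integralZl // integral_cst // Em -EFinM.
rewrite (_ : _ * P _ = (m ^+ 2)%:E); last first.
  by rewrite -[RHS]mule1; congr (_ * _); exact: probability_setT.
by rewrite -EFin_expe -EFinB lee_fin; nra.
Qed.

End integral_bounds.

Lemma ler_min_dist {R : realDomainType} (c a b : R) :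
  Num.min c a <= Num.min c b + `|a - b|.
Proof.
have := ler_norm (a - b); have := ler_norm (b - a); rewrite distrC.
by rewrite /Num.min; case: ifP; case: ifP; lra.
Qed.

Lemma supcloseC {R : realType} {X : normedModType R} {T e : R} {phi psi : R -> X} :
  supclose T e phi psi -> supclose T e psi phi.
Proof. by move=> close t t0T; rewrite distrC; exact: close. Qed.

Section bump.
Context {R : realType} {X : normedModType R} {T : R} {phi0 : R -> X} {delta : R}.
Hypotheses (T0 : 0 <= T) (delta0 : 0 < delta).

(* Truncating at [delta] keeps the set bounded for every path, so [sup] is never a junk value. *)
Let dists (psi : R -> X) : set R :=
  [set Num.min delta `|phi0 t - psi t| | t in [set t | t \in `[0, T]]].

Definition trunc_sup_dist (psi : R -> X) : R := sup (dists psi).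

Let dists_neq0 psi : dists psi !=set0.
Proof. by exists (Num.min delta `|phi0 0 - psi 0|), 0 => //=; rewrite in_itv /= lexx. Qed.

Let dists_ub psi : ubound (dists psi) delta.
Proof. by move=> _ [t _ <-]; rewrite ge_min lexx. Qed.

Lemma trunc_sup_dist_le psi : trunc_sup_dist psi <= delta.
Proof. exact: ge_sup (dists_neq0 psi) (dists_ub psi). Qed.

Lemma trunc_sup_dist_ge psi t : t \in `[0, T] ->
  Num.min delta `|phi0 t - psi t| <= trunc_sup_dist psi.
Proof. by move=> t0T; apply: ub_le_sup; [exists delta; exact: dists_ub | exists t]. Qed.

Lemma trunc_sup_dist_ge0 psi : 0 <= trunc_sup_dist psi.
Proof.
apply: le_trans (trunc_sup_dist_ge psi 0 _); last by rewrite in_itv /= lexx.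
by rewrite le_min (ltW delta0) normr_ge0.
Qed.

Lemma trunc_sup_dist_center : trunc_sup_dist phi0 = 0.
Proof.
apply/eqP; rewrite eq_le trunc_sup_dist_ge0 andbT; apply: ge_sup (dists_neq0 phi0) _.
by move=> _ [t _ <-]; rewrite subrr normr0 ge_min lexx orbT.
Qed.

Lemma trunc_sup_dist_far psi : ~ supclose T delta phi0 psi -> trunc_sup_dist psi = delta.
Proof.
move=> /existsNP [t /not_implyP [t0T /negP]]; rewrite -ltNge => far.
apply/eqP; rewrite eq_le trunc_sup_dist_le /=.
by rewrite (le_trans _ (trunc_sup_dist_ge psi t t0T)) // le_min lexx (ltW far).
Qed.

Lemma trunc_sup_dist_lipschitz {psi psi' : R -> X} {e : R} : supclose T e psi psi' ->
  trunc_sup_dist psi <= trunc_sup_dist psi' + e.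
Proof.
move=> close; apply: ge_sup (dists_neq0 psi) _ => _ [t t0T <-].
apply: le_trans (ler_min_dist _ _ `|phi0 t - psi' t|) _.
apply: lerD; first exact: trunc_sup_dist_ge.
apply: le_trans (ler_dist_dist _ _) _.
by rewrite opprB addrC addrA subrK distrC; exact: close.
Qed.

Definition bump (M : R) (psi : R -> X) : R := M / delta * trunc_sup_dist psi.

Lemma bump_ge0 M psi : 0 <= M -> 0 <= bump M psi.
Proof. by move=> M0; rewrite mulr_ge0 ?divr_ge0 ?trunc_sup_dist_ge0 ?(ltW delta0). Qed.

Lemma bump_center M : bump M phi0 = 0.
Proof. by rewrite /bump trunc_sup_dist_center mulr0. Qed.

Lemma bump_far M psi : ~ supclose T delta phi0 psi -> bump M psi = M.
Proof. by move=> far; rewrite /bump trunc_sup_dist_far // mulfVK ?gt_eqF. Qed.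

Lemma bdd_cont_bump M : 0 < M -> bdd_cont_functional T (bump M).
Proof.
move=> M0; split.
  exists M => psi _; rewrite ger0_norm ?bump_ge0 ?(ltW M0) // /bump.
  by rewrite mulrAC ler_pdivrMr // ler_wpM2l ?(ltW M0) // trunc_sup_dist_le.
move=> phi _ e e0; exists (e * delta / M) => [|psi _ close].
  by rewrite divr_gt0 // mulr_gt0.
have := trunc_sup_dist_lipschitz close; have := trunc_sup_dist_lipschitz (supcloseC close).
rewrite /bump -mulrBr normrM ger0_norm ?divr_ge0 ?(ltW M0) ?(ltW delta0) // => le1 le2.
rewrite -ler_pdivlMl ?divr_gt0 // invf_div mulrAC mulrC; apply/ler_normlP.
by split; lra.
Qed.

End bump.

Arguments trunc_sup_dist {R X} T phi0 delta psi.
Arguments bump {R X} T phi0 delta M psi.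

Section MDP_lower_bound.
Context {R : realType} {X : normedModType R} {d : measure_display}
  {Omega : measurableType d} {P : probability Omega R}.

Lemma integral_bump_le {T delta M q : R} {phi0 : R -> X} {A : set (R -> X)}
    {Y : Omega -> R -> X} :
  0 <= T -> 0 < delta -> 0 <= M -> 0 <= q ->
  (forall psi, Cpath T psi -> supclose T delta phi0 psi -> A psi) ->
  (forall w, Cpath T (Y w)) -> measurable [set w | A (Y w)] ->
  (\int[P]_w (expR (- (q * bump T phi0 delta M (Y w))))%:E <=
    P [set w | A (Y w)] + (expR (- (q * M)))%:E)%E.
Proof.
move=> T0 delta0 M0 q0 ballA CY mA.
apply: integral_le_measure_addr => // w; rewrite indicE.
have [_|notAYw] := boolP (w \in _).
  apply: (@le_trans _ _ 1); last by rewrite lerDl expR_ge0.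
  by rewrite expR_le1 oppr_le0 mulr_ge0 ?bump_ge0.
rewrite bump_far ?add0r // => close.
by move/negP: notAYw; apply; rewrite inE; exact: ballA.
Qed.

Context {h : R -> R} {Xe : R -> Omega -> R -> X} {xstar : X} {T : R}
  {S : (R -> X) -> \bar R}.
Hypotheses (T0 : 0 <= T) (mdp : MDP P h Xe xstar T S)
  (h_oo : h x @[x --> 0^'+] --> +oo).

Local Notation eta := (eta_of h Xe xstar).

Context {phi0 : R -> X} {delta : R}.
Hypotheses (Cphi0 : Cpath T phi0) (phi00 : phi0 0 = 0) (delta0 : 0 < delta).

Lemma laplace_bump_lower_bound (M s : R) : 0 < M -> (S phi0 < s%:E)%E ->
  \forall eps \near 0^'+, ((expR (- s * h eps ^+ 2))%:E <
    \int[P]_w (expR (- (h eps ^+ 2 * bump T phi0 delta M (eta eps w))))%:E)%E.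
Proof.
move=> M0 Ss; have [_ laplace] := mdp.
have cvg_l := laplace _ (bdd_cont_bump T0 delta0 M M0).
have sl : ((- s)%:E < - ereal_inf [set (S phi + (bump T phi0 delta M phi)%:E)%E
                       | phi in [set phi | Cpath T phi /\ phi 0%R = 0%R]])%E.
  rewrite EFinN lteN2; apply: le_lt_trans Ss; apply: ereal_inf_lbound.
  by exists phi0 => //; rewrite bump_center // adde0.
have /cvgryPgt /(_ 0) h_pos := h_oo.
near=> eps.
have : ((- s)%:E < (h eps ^- 2)%:E * elog (\int[P]_w
    (expR (- (h eps ^+ 2 * bump T phi0 delta M (eta eps w))))%:E))%E.
  by near: eps; exact: cvg_l _ (open_ereal_gt' sl).
by rewrite lte_elog_expR // exprn_gt0 //; near: eps.
Unshelve. all: by end_near.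
Qed.

Context {A : set (R -> X)}.
Hypotheses (ballA : forall psi, Cpath T psi -> supclose T delta phi0 psi -> A psi)
  (Ceta : forall eps, 0 < eps -> forall w, Cpath T (eta eps w))
  (mA : forall eps, 0 < eps -> measurable [set w | A (eta eps w)]).

Lemma MDP_ball_lower_bound {r : R} : (S phi0 < r%:E)%E ->
  \forall eps \near 0^'+, ((expR (- r * h eps ^+ 2))%:E < P [set w | A (eta eps w)])%E.
Proof.
move=> Sr; have [[S_ge0 _] _] := mdp.
have [s Ss] : exists s, S phi0 = s%:E.
  by exists (fine (S phi0)); rewrite fineK // ge0_fin_numE // (lt_trans Sr) ?ltry.
have s0 : 0 <= s by rewrite -lee_fin -Ss.
have sr : s < r by rewrite -lte_fin -Ss.
have r0 : 0 < r := le_lt_trans s0 sr.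
pose m := (s + r) / 2.
have Sm : (S phi0 < m%:E)%E by rewrite Ss lte_fin /m; lra.
have /cvgryPgt /(_ (1 + 2 / (r - s))) h_big := h_oo.
near=> eps.
have eps0 : 0 < eps by near: eps; exact: nbhs_right_gt.
have hb : 1 + 2 / (r - s) < h eps by near: eps; exact: h_big.
have lowI : ((expR (- m * h eps ^+ 2))%:E <
    \int[P]_w (expR (- (h eps ^+ 2 * bump T phi0 delta r (eta eps w))))%:E)%E.
  by near: eps; exact: laplace_bump_lower_bound.
set q := h eps ^+ 2 in lowI *.
have q0 : 0 <= q by rewrite /q sqr_ge0.
(* [q (r - m) >= 1] makes the bump penalty [expR (- r q)] at most half of [expR (- m q)] *)
have gap : 2 * expR (- r * q) <= expR (- m * q).
  have -> : - m * q = (r - m) * q + - r * q by ring.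
  rewrite expRD ler_pM2r ?expR_gt0 //; apply: le_trans (expR_ge1Dx _).
  have : 2 / (r - s) < q.
    rewrite /q expr2; have : 0 < 2 / (r - s) by rewrite divr_gt0 // subr_gt0.
    by nra.
  rewrite ltr_pdivrMr ?subr_gt0 // /m; lra.
have upI := integral_bump_le T0 delta0 (ltW r0) q0 ballA (Ceta eps eps0) (mA eps eps0).
have := lt_le_trans lowI upI; rewrite -lteBlDr // -EFinB; apply: le_lt_trans.
by rewrite lee_fin lerBrDr (mulrC q r) -mulNr; lra.
Unshelve. all: by end_near.
Qed.

End MDP_lower_bound.

Section continuity_set.
Context {R : realType} {X : normedModType R} {T : R}.

Lemma subset_Cclosure (A : set (R -> X)) : A `&` Cpath T `<=` Cclosure T A.
Proof.
move=> phi [Aphi Cphi]; split=> // e e0.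
by exists phi => // t _; rewrite subrr normr0 ltW.
Qed.

Lemma continuity_set_interior_lt {S : (R -> X) -> \bar R} {E B : set (R -> X)}
    {z : \bar R} :
  continuity_set T S E -> B `<=` E `&` Cpath T `&` [set phi | phi 0 = 0] ->
  (ereal_inf (S @` B) < z)%E ->
  exists2 phi, Cinterior T E phi /\ phi 0 = 0 & (S phi < z)%E.
Proof.
move=> Econt BE Bz.
have : (ereal_inf (S @` (Cinterior T E `&` [set phi | phi 0 = 0]%R)) < z)%E.
  rewrite -Econt; apply: le_lt_trans Bz; apply/ereal_inf_le_tmp/image_subset.
  by move=> phi /BE [EC phi00]; split=> //; exact: subset_Cclosure.
by move=> /ereal_inf_lt [_ [phi Ephi <-] Sz]; exists phi.
Qed.

End continuity_set.

Theorem lemma3p2 (R : realType) (X : normedModType R) (nH : X -> R)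
  (d : measure_display) (Omega : measurableType d) (P : probability Omega R)
  (d' : measure_display) (Omega' : measurableType d') (Pbar : probability Omega' R)
  (h : R -> R) (Xe : R -> Omega -> R -> X) (xstar : X) (T L : R)
  (S : (R -> X) -> \bar R) (Phat : R -> {RV Pbar >-> R}) :
  continuous nH ->
  0 < T -> 0 < L ->
  h x @[x --> 0^'+] --> +oo ->
  Num.sqrt x * h x @[x --> 0^'+] --> 0 ->
  (forall eps, 0 < eps -> forall w, Cpath T (eta_of h Xe xstar eps w)) ->
  (forall eps, 0 < eps -> forall A, Copen T A ->
     measurable [set w | A (eta_of h Xe xstar eps w)]) ->
  MDP P h Xe xstar T S ->
  continuity_set T S [set phi | Cpath T phi /\ (exit_time nH T L phi <= T%:E)%E] ->
  (forall eps, 0 < eps ->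
     Pbar.-integrable setT (EFin \o Phat eps) /\
     ('E_Pbar[Phat eps] =
       P [set w | (exit_time nH T L (eta_of h Xe xstar eps w) <= T%:E)%E])%E) ->
  (limf_esup
     (fun eps => - ((h eps ^- 2)%:E * elog (\int[Pbar]_w ((Phat eps w) ^+ 2)%:E)))
     0^'+
   <= 2%:E * ereal_inf [set S phi | phi in
        [set phi | Cpath T phi /\ phi 0%R = 0%R /\ exit_time nH T L phi = T%:E]])%E.
Proof.
(* Neither [0 < L] nor [Num.sqrt eps * h eps --> 0] is needed. *)
move=> nH_cont T0 _ h_oo _ Ceta Copen_meas mdp Econt Phat_unbiased.
have [[S_ge0 _] _] := mdp.
apply: lee_pmul_of_forall_gt => // [|r Gr].
  by apply: le_ereal_inf_tmp => _ [phi _ <-]; exact: S_ge0.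
have [|phi0 [[[Cphi0 _] [_ [delta delta0 ballE]]] phi00] Sr] :=
  continuity_set_interior_lt Econt _ Gr.
  by move=> phi [Cphi [phi00 exitT]]; do !split=> //; rewrite exitT.
have ballA psi (Cpsi : Cpath T psi) (close : supclose T delta phi0 psi) :
  (exit_time nH T L psi <= T%:E)%E := (ballE psi Cpsi close).2.
have exit_meas (eps : R) (eps0 : 0 < eps) :=
  measurable_exit_event (L := L) nH_cont (Ceta eps eps0) (Copen_meas eps eps0).
have low := MDP_ball_lower_bound (ltW T0) mdp h_oo Cphi0 phi00 delta0 ballA Ceta exit_meas Sr.
have /cvgryPgt /(_ 0) h_pos := h_oo.
apply: limf_esup_le_near; near=> eps.
have eps0 : 0 < eps by near: eps; exact: nbhs_right_gt.
have [iPhat EPhat] := Phat_unbiased eps eps0.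
rewrite /= leeNl -EFinN lee_elog_expR; last by rewrite exprn_gt0 //; near: eps.
apply: le_trans _ (sqr_integral_le_integral_sqr iPhat).
rewrite -expectation_def EPhat (_ : _ * _ = 2%:R * (- r * h eps ^+ 2)); last by ring.
rewrite expRM_natl EFin_expe lee_sqr ?lee_fin ?expR_ge0 ?measure_ge0 //.
by apply/ltW; near: eps.
Unshelve. all: by end_near.
Qed.
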